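(* For every positive integer $k$ there exist $d_k > 0$ and $n_0$ such that for every $n\ge n_0$ the following holds. If $G$ is a $k$-partite $k$-graph with vertex classes $V_1, \dots, V_k$ each of $n$ vertices in which every vertex lies in at least $(1-d_k)n^{k-1}$ edges of $G$, then $G$ contains a perfect matching.
   Context: A $k$-partite $k$-graph with vertex classes $V_1,\dots,V_k$ is a set of $k$-element subsets (edges) of $V_1\cup\dots\cup V_k$ each containing exactly one vertex of each $V_i$. A perfect matching is a set of pairwise disjoint edges covering every vertex. *)

From mathcomp Require Import all_boot all_order all_algebra.
Set Implicit Arguments. Unset Strict Implicit. Unset Printing Implicit Defensive.

(* The vertex set is encoded as pairs (i, v) with i : 'I_k (class) and
   v : 'I_n (vertex within class V_i).  An edge contains exactly one vertex
   of each class, hence is encoded as a function e : 'I_k -> 'I_n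
   (e i = the vertex of the edge in class V_i). *)
Definition kpgraph (k n : nat) := {set {ffun 'I_k -> 'I_n}}.

Definition in_edge k n (i : 'I_k) (v : 'I_n) (e : {ffun 'I_k -> 'I_n}) : bool :=
  e i == v.

Definition vdeg k n (G : kpgraph k n) (i : 'I_k) (v : 'I_n) : nat :=
  #|[set e in G | in_edge i v e]|.

Definition perfect_matching k n (G M : kpgraph k n) : Prop :=
  [/\ M \subset G,
      (forall e f, e \in M -> f \in M -> e != f ->
         forall i : 'I_k, e i != f i)
    & (forall (i : 'I_k) (v : 'I_n), exists2 e, e \in M & in_edge i v e)].

From mathcomp Require Import all_boot all_order all_algebra.
From mathcomp Require Import zify lra.
Import Order.TTheory GRing.Theory Num.Theory.
Set Implicit Arguments. Unset Strict Implicit. Unset Printing Implicit Defensive.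

(* Take a perfect matching S of the complete k-partite k-graph with as many
   edges in G as possible, and suppose some s0 in S is not an edge of G.
   For a k-tuple x, let e_0 = s0 and let e_(l+1) be the edge of S through the
   vertex x_l of the class V_l.  The k+1 "rotated" edges f_j, whose vertex in
   V_i is that of e_((i+1+j) mod (k+1)), cover exactly the vertices of the
   e_m, and f_0 = x.  So if the e_m are distinct and every f_j lies in G,
   trading the e_m for the f_j gives a better matching.  Few x are bad: for
   j > 0, f_j passes through the vertex of s0 in some class and, together
   with one coordinate, determines x, so it is a non-edge for few x when the
   minimum degree is close to n^(k-1); and e_m = e_(l+1) forces a coordinate
   x_l as a function of the others.  With d = 1/(2(k+1)) and n large, fewer
   than n^k tuples x are bad. *)

Lemma card_bigcup_le (T I : finType) (F : I -> {set T}) :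
  #|\bigcup_i F i| <= \sum_i #|F i|.
Proof.
apply: (big_ind2 (fun (A : {set T}) s => #|A| <= s)) => [|A1 s1 A2 s2 h1 h2|//].
  by rewrite cards0.
exact: leq_trans (leq_card_setU A1 A2) (leq_add h1 h2).
Qed.

Lemma card_ffun_ord k n : #|{ffun 'I_k -> 'I_n}| = n ^ k.
Proof. by rewrite card_ffun !card_ord. Qed.

Definition ffun_upd k n (e : {ffun 'I_k -> 'I_n}) (i : 'I_k) (w : 'I_n) :
  {ffun 'I_k -> 'I_n} := [ffun l => if l == i then w else e l].

Lemma ffun_upd_eq k n (x y : {ffun 'I_k -> 'I_n}) i w w' :
  ffun_upd x i w = ffun_upd y i w' -> x i = y i -> x = y.
Proof.
move=> h hi; apply/ffunP => l; case: (eqVneq l i) => [-> //|nl].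
by have := congr1 (fun f : {ffun _ -> _} => f l) h; rewrite !ffunE (negbTE nl).
Qed.

Lemma card_determined_off_le k n (A : {set {ffun 'I_k -> 'I_n}}) (i : 'I_k) :
  {in A &, forall x y, forall w w', ffun_upd x i w = ffun_upd y i w' -> x = y} ->
  #|A| * n <= n ^ k.
Proof.
move=> detA; rewrite -card_ffun_ord.
have <- : #|setX A [set: 'I_n]| = #|A| * n by rewrite cardsX cardsT card_ord.
rewrite -(@card_in_imset _ _ (fun p => ffun_upd p.1 i p.2)).
  exact: max_card.
move=> [x w] [y w'] /setXP [xA _] /setXP [yA _] /= he.
have -> : w = w'.
  by have := congr1 (fun f : {ffun _ -> _} => f i) he; rewrite !ffunE eqxx.
by rewrite (detA _ _ xA yA _ _ he).
Qed.

Lemma card_ffun_fiber_le k n (i : 'I_k.+1) (v : 'I_n) :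
  #|[set e : {ffun 'I_k.+1 -> 'I_n} | e i == v]| <= n ^ k.
Proof.
have n_gt0 : 0 < n := leq_ltn_trans (leq0n v) (ltn_ord v).
rewrite -(leq_pmul2r n_gt0) -expnSr; apply: (card_determined_off_le (i := i)).
move=> x y; rewrite !inE => /eqP xv /eqP yv w w' /ffun_upd_eq; apply.
by rewrite xv yv.
Qed.

Section Matchings.
Variables (k n : nat).
Local Notation T := {ffun 'I_k -> 'I_n}.
Implicit Types (G S : kpgraph k n) (e f : T).

Lemma matching_eq G S e f i :
  perfect_matching G S -> e \in S -> f \in S -> e i = f i -> e = f.
Proof.
case=> _ disjS _ eS fS efi; case: (eqVneq e f) => // nef.
by move: (disjS e f eS fS nef i); rewrite efi eqxx.
Qed.

Lemma perfect_matching_sub G S :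
  perfect_matching [set: _] S -> S \subset G -> perfect_matching G S.
Proof. by case. Qed.

Lemma perfect_matching_diag : perfect_matching [set: T] [set [ffun=> v] | v : 'I_n].
Proof.
split=> [|e f /imsetP [v _ ->] /imsetP [w _ ->] nvw i|i v]; first exact: subsetT.
  by rewrite !ffunE; apply: contra nvw => /eqP ->.
by exists [ffun=> v]; [apply: imset_f | rewrite /in_edge ffunE].
Qed.

Definition nonedges_at G (i : 'I_k) (v : 'I_n) :=
  [set e : T | (e i == v) && (e \notin G)].

Lemma improvable_perfect_matching G :
  (forall S s0, perfect_matching [set: _] S -> s0 \in S -> s0 \notin G ->
     exists2 S', perfect_matching [set: _] S' & #|S :&: G| < #|S' :&: G|) ->
  exists M, perfect_matching G M.
Proof.
move=> improve; have [S pmS] : exists S : kpgraph k n, perfect_matching [set: T] S.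
  by exists [set [ffun=> v] | v : 'I_n]; exact: perfect_matching_diag.
have [m ltSm] := ubnP #|~: (S :&: G)|; elim: m => // m IHm in S ltSm pmS *.
have [SG|/subsetPn [s0 s0S s0G]] := boolP (S \subset G).
  by exists S; apply: perfect_matching_sub.
have [S' pmS' ltSS'] := improve S s0 pmS s0S s0G.
apply: (IHm S') => //.
suff : #|S :&: G| + #|~: (S :&: G)| = #|S' :&: G| + #|~: (S' :&: G)| by lia.
by rewrite !cardsC.
Qed.

End Matchings.

Section Block.
Variables (k n : nat) (S : kpgraph k n).
Hypothesis pmS : perfect_matching [set: _] S.

Definition block (i : 'I_k) (v : 'I_n) : {ffun 'I_k -> 'I_n} :=
  odflt [ffun=> v] [pick e in S | e i == v].

Lemma blockP i v : block i v \in S /\ block i v i = v.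
Proof.
rewrite /block; case: pickP => [e /andP [eS /eqP ev] | noS] //=.
case: pmS => _ _ /(_ i v) [e eS /eqP ev].
by move: (noS e); rewrite eS ev eqxx.
Qed.

End Block.

Section Switch.
Variables (K n : nat) (S : kpgraph K.+1 n) (s0 : {ffun 'I_K.+1 -> 'I_n}).
Hypotheses (pmS : perfect_matching [set: _] S) (s0S : s0 \in S).
Local Notation T := {ffun 'I_K.+1 -> 'I_n}.

Definition switch_edge (x : T) (m : nat) : T :=
  if m is l.+1 then block S (inord l) (x (inord l)) else s0.

Lemma switch_edge_in x m : switch_edge x m \in S.
Proof. by case: m => [|l] //=; case: (blockP pmS (inord l) (x (inord l))). Qed.

Lemma switch_edgeS x (l : 'I_K.+1) : switch_edge x l.+1 = block S l (x l).
Proof. by rewrite /= inord_val. Qed.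

Lemma switch_edgeS_at x (l : 'I_K.+1) : switch_edge x l.+1 l = x l.
Proof. by rewrite switch_edgeS; case: (blockP pmS l (x l)). Qed.

Lemma switch_edge_upd x (l : 'I_K.+1) w (m : 'I_K.+2) :
  m != l.+1 :> nat -> switch_edge (ffun_upd x l w) m = switch_edge x m.
Proof.
case: m => [[|l'] lt_l'K] //= nml.
have -> : inord l' = Ordinal (lt_l'K : l' < K.+1) by apply/val_inj; rewrite /= inordK.
rewrite ffunE; case: eqVneq => // el.
by rewrite -el eqxx in nml.
Qed.

Definition rot_index (i : 'I_K.+1) (j : nat) := (i.+1 + j) %% K.+2.

Lemma rot_index_lt i j : rot_index i j < K.+2.
Proof. exact: ltn_pmod. Qed.

Lemma rot_index_inj i j j' :
  j < K.+2 -> j' < K.+2 -> rot_index i j = rot_index i j' -> j = j'.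
Proof. by move=> ltj ltj' /eqP; rewrite /rot_index eqn_modDl !modn_small // => /eqP. Qed.

Lemma rot_index_surj (i : 'I_K.+1) m :
  m < K.+2 -> exists2 j, j < K.+2 & rot_index i j = m.
Proof.
move=> ltm; exists ((m + K.+2 - i.+1) %% K.+2); first exact: ltn_pmod.
rewrite /rot_index modnDmr.
have -> : i.+1 + (m + K.+2 - i.+1) = m + K.+2 by have := ltn_ord i; lia.
by rewrite modnDr modn_small.
Qed.

Lemma rot_index_surj_class j (l : 'I_K.+1) :
  j < K.+2 -> l.+1 != j -> exists i : 'I_K.+1, rot_index i j = l.+1.
Proof.
move=> ltj nlj; have ltl := ltn_ord l.
set r := (l + K.+2 - j) %% K.+2.
have rotr : (r.+1 + j) %% K.+2 = l.+1.
  rewrite addSnnS modnDml.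
  have -> : l + K.+2 - j + j.+1 = l.+1 + K.+2 by lia.
  by rewrite modnDr modn_small.
suff ltr : r < K.+1 by exists (Ordinal ltr).
have : r < K.+2 by exact: ltn_pmod.
rewrite ltnS leq_eqVlt => /orP [/eqP rK|//].
by move: rotr; rewrite rK addnC modnDr modn_small // => lj; rewrite lj eqxx in nlj.
Qed.

Definition rotated_edge (x : T) (j : nat) : T :=
  [ffun i => switch_edge x (rot_index i j) i].

Lemma rotated_edge0 x : rotated_edge x 0 = x.
Proof.
apply/ffunP => i; rewrite ffunE /rot_index addn0 modn_small; last exact: ltn_ord i.
exact: switch_edgeS_at.
Qed.

Definition switchable (G : kpgraph K.+1 n) (x : T) :=
  (forall j, j < K.+2 -> rotated_edge x j \in G) /\
  {in gtn K.+2 &, injective (switch_edge x)}.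

Section SwitchAt.
Variables (G : kpgraph K.+1 n) (x : T).
Hypothesis switchable_x : switchable G x.

Definition switched_out := [set switch_edge x m | m : 'I_K.+2].
Definition switched_in := [set rotated_edge x j | j : 'I_K.+2].
Definition switched := (S :\: switched_out) :|: switched_in.

Lemma rotated_edge_inj j j' i :
  j < K.+2 -> j' < K.+2 -> rotated_edge x j i = rotated_edge x j' i -> j = j'.
Proof.
move=> ltj ltj'; rewrite !ffunE => /(matching_eq pmS (switch_edge_in _ _) (switch_edge_in _ _)).
by move/(switchable_x.2 _ _ (rot_index_lt _ _) (rot_index_lt _ _))/rot_index_inj; apply.
Qed.

Lemma rotated_edge_fresh j (e : T) i :
  e \in S -> e \notin switched_out -> e i != rotated_edge x j i.
Proof.
move=> eS eout; apply/eqP; rewrite ffunE => /(matching_eq pmS eS (switch_edge_in _ _)) ee.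
by case/negP: eout; rewrite ee; apply/imsetP; exists (Ordinal (rot_index_lt i j)).
Qed.

Lemma perfect_matching_switched : perfect_matching [set: _] switched.
Proof.
split=> [|e f|i v]; first exact: subsetT.
  rewrite !inE => /orP [/andP [eout eS] | /imsetP [j _ ->]]
                  /orP [/andP [fout fS] | /imsetP [j' _ ->]] nef i.
  - by case: pmS => _ disjS _; apply: disjS.
  - exact: rotated_edge_fresh.
  - by rewrite eq_sym rotated_edge_fresh.
  - by apply: contra nef => /eqP /(rotated_edge_inj (ltn_ord j) (ltn_ord j')) /val_inj ->.
have [bS bv] := blockP pmS i v.
case: (boolP (block S i v \in switched_out)) => [/imsetP [m _ em] | bout].
  have [j ltj rotj] := rot_index_surj i (ltn_ord m).
  exists (rotated_edge x j); first by rewrite inE (imset_f _ (_ : Ordinal ltj \in _)) ?orbT.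
  by rewrite /in_edge ffunE rotj -em bv.
by exists (block S i v); rewrite ?inE ?bout ?bS /in_edge ?bv.
Qed.

Lemma switched_gain : s0 \notin G -> #|S :&: G| < #|switched :&: G|.
Proof.
move=> s0G.
have inG : switched_in \subset G by apply/subsetP => e /imsetP [j _ ->]; exact: switchable_x.1.
have sub : ((S :&: G) :\: switched_out) :|: switched_in \subset switched :&: G.
  apply/subsetP => e; rewrite !inE => /orP [/andP [-> /andP [-> ->]] // | ein].
  by rewrite (subsetP inG _ ein) ein orbT.
have disj : ((S :&: G) :\: switched_out) :&: switched_in = set0.
  apply/setP => e; rewrite !inE; apply/negP => /andP [/andP [eout /andP [eS _]]].
  case/imsetP => j _ ej.
  by move: (rotated_edge_fresh j ord0 eS eout); rewrite -ej eqxx.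
have card_in : #|switched_in| = K.+2.
  rewrite card_in_imset ?card_ord // => j j' _ _ /(congr1 (fun f : T => f ord0)).
  by move/(rotated_edge_inj (ltn_ord j) (ltn_ord j'))/val_inj.
have card_out : #|switched_out| <= K.+2 by rewrite -[X in _ <= X]card_ord leq_imset_card.
have s0out : s0 \in switched_out by apply/imsetP; exists ord0.
have card_GS : #|(S :&: G) :&: switched_out| <= K.+1.
  have : (S :&: G) :&: switched_out \subset switched_out :\ s0.
    apply/subsetP => e; rewrite !inE => /andP [/andP [_ eG] ->]; rewrite andbT.
    by apply: contraNneq s0G => <-.
  by move/subset_leq_card/leq_trans; apply; move: card_out; rewrite (cardsD1 s0) s0out.
have := subset_leq_card sub; rewrite cardsU disj cards0 subn0 cardsD card_in.
by have := subset_leq_card (subsetIl (S :&: G) switched_out); lia.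
Qed.

End SwitchAt.

Section Counting.
Variable G : kpgraph K.+1 n.
Hypothesis few_nonedges_at : forall i v, #|nonedges_at G i v| * (2 * K.+2) <= n ^ K.
Hypothesis large_n : 2 * K.+2 * K.+1 < n.

Definition rotated_nonedge (j : nat) := [set x : T | rotated_edge x j \notin G].

Definition collision (p : 'I_K.+2 * 'I_K.+1) :=
  [set x : T | (p.1 != p.2.+1 :> nat) && (x p.2 == switch_edge x p.1 p.2)].

Definition bad_tuples :=
  (\bigcup_(j : 'I_K.+2) rotated_nonedge j) :|: \bigcup_p collision p.

Lemma card_rotated_nonedge0 : #|rotated_nonedge 0| * (2 * K.+2) <= n ^ K.+1.
Proof.
have sub : rotated_nonedge 0 \subset \bigcup_(v : 'I_n) nonedges_at G ord0 v.
  apply/subsetP => x; rewrite inE rotated_edge0 => xG.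
  by apply/bigcupP; exists (x ord0); rewrite ?inE ?eqxx.
apply: leq_trans (leq_mul (leq_trans (subset_leq_card sub) (card_bigcup_le _)) (leqnn _)) _.
rewrite big_distrl /= expnS.
apply: (@leq_trans (\sum_(v < n) n ^ K)); first by apply: leq_sum => v _.
by rewrite sum_nat_const card_ord.
Qed.

Lemma card_rotated_nonedgeS (l : 'I_K.+1) :
  #|rotated_nonedge l.+1| * (2 * K.+2) <= n ^ K.+1.
Proof.
pose i0 : 'I_K.+1 := Ordinal (leq_subr l K : K - l < K.+1).
have rot_i0 : rot_index i0 l.+1 = 0.
  rewrite /rot_index /=; have -> : (K - l).+1 + l.+1 = K.+2 by have := ltn_ord l; lia.
  exact: modnn.
have sub : [set (rotated_edge x l.+1, x l) | x in rotated_nonedge l.+1]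
           \subset setX (nonedges_at G i0 (s0 i0)) [set: 'I_n].
  by apply/subsetP => _ /imsetP [y ybad ->]; move: ybad; rewrite !inE ffunE rot_i0 /= eqxx andbT.
have inj : {in rotated_nonedge l.+1 &, injective (fun x => (rotated_edge x l.+1, x l))}.
  move=> x y _ _ [exy xyl]; apply/ffunP => l'.
  have [-> //|nl'l] := eqVneq l' l.
  have [|i roti] := @rot_index_surj_class l.+1 l' (ltn_ord l); first by rewrite eqSS.
  have := congr1 (fun f : T => f i) exy; rewrite !ffunE roti.
  move/(matching_eq pmS (switch_edge_in _ _) (switch_edge_in _ _)) => exyl'.
  by rewrite -(switch_edgeS_at x l') exyl' switch_edgeS_at.
have := subset_leq_card sub; rewrite card_in_imset // cardsX cardsT card_ord => le_bad.
apply: leq_trans (leq_mul le_bad (leqnn _)) _.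
by rewrite mulnAC expnSr leq_mul2r few_nonedges_at orbT.
Qed.

Lemma card_rotated_nonedge (j : 'I_K.+2) :
  #|rotated_nonedge j| * (2 * K.+2) <= n ^ K.+1.
Proof.
case: j => [[|l] ltl]; first exact: card_rotated_nonedge0.
exact: (card_rotated_nonedgeS (Ordinal (ltl : l < K.+1))).
Qed.

Lemma card_collision p : #|collision p| * n <= n ^ K.+1.
Proof.
apply: (card_determined_off_le (i := p.2)) => x y.
rewrite !inE => /andP [np /eqP xp] /andP [_ /eqP yp] w w' exy.
suff exyp : x p.2 = y p.2 by exact: ffun_upd_eq exy exyp.
by rewrite xp yp -(switch_edge_upd x w np) -(switch_edge_upd y w' np) exy.
Qed.

Lemma card_bad_tuples_lt : #|bad_tuples| < n ^ K.+1.
Proof.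
set N := n ^ K.+1.
set a := \sum_(j < K.+2) #|rotated_nonedge j|; set b := \sum_p #|collision p|.
have n_gt0 : 0 < n by lia.
have N_gt0 : 0 < N by rewrite expn_gt0 n_gt0.
have le_a : a * 2 <= N.
  rewrite -(leq_pmul2r (ltn0Sn K.+1)) -mulnA big_distrl /=.
  apply: (@leq_trans (\sum_(j < K.+2) N)); first by apply: leq_sum => j _; apply: card_rotated_nonedge.
  by rewrite sum_nat_const card_ord mulnC.
have le_b : b * n <= K.+2 * K.+1 * N.
  rewrite big_distrl /=.
  apply: (@leq_trans (\sum_(p : 'I_K.+2 * 'I_K.+1) N)); first by apply: leq_sum => p _; apply: card_collision.
  by rewrite sum_nat_const card_prod !card_ord.
have lt_b : b * 2 < N.
  rewrite -(ltn_pmul2r n_gt0).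
  have : 2 * K.+2 * K.+1 * N < n * N by rewrite ltn_pmul2r.
  lia.
have le_bad : #|bad_tuples| <= a + b.
  exact: leq_trans (leq_card_setU _ _) (leq_add (card_bigcup_le _) (card_bigcup_le _)).
lia.
Qed.

Lemma collision_bad m (l : 'I_K.+1) x : m < K.+2 -> m != l.+1 ->
  switch_edge x m = switch_edge x l.+1 -> x \in bad_tuples.
Proof.
move=> ltm nml exl; rewrite inE; apply/orP; right; apply/bigcupP.
by exists (Ordinal ltm, l); rewrite // inE nml exl switch_edgeS_at eqxx.
Qed.

Lemma exists_switchable : exists x, switchable G x.
Proof.
have [x xgood] : exists x, x \notin bad_tuples.
  apply/existsP; rewrite -negb_forall; apply/negP => /forallP allbad.
  have := card_bad_tuples_lt; rewrite -card_ffun_ord.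
  by rewrite (eq_card (B := predT)) ?ltnn // => y; rewrite allbad.
exists x; split=> [j ltj|m m' ltm ltm' exmm'].
  apply: contraR xgood => xjG; rewrite inE; apply/orP; left.
  by apply/bigcupP; exists (Ordinal ltj); rewrite ?inE.
apply/eqP; apply: contraR xgood => nmm'.
case: m' ltm' exmm' nmm' => [|l] ltm' exmm' nmm'.
  case: m ltm exmm' nmm' => [//|l] ltm exmm' _.
  by apply: (collision_bad (l := Ordinal (ltm : l < K.+1)) _ _ (esym exmm')).
exact: (collision_bad (l := Ordinal (ltm' : l < K.+1)) ltm nmm' exmm').
Qed.

Lemma exists_better_matching : s0 \notin G ->
  exists2 S', perfect_matching [set: T] S' & #|S :&: G| < #|S' :&: G|.
Proof.
move=> s0G; have [x switchable_x] := exists_switchable.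
exists (switched x); first exact: perfect_matching_switched switchable_x.
exact: switched_gain switchable_x s0G.
Qed.

End Counting.
End Switch.

Lemma card_nonedges_at_add_vdeg K n (G : kpgraph K.+1 n) i v :
  #|nonedges_at G i v| + vdeg G i v <= n ^ K.
Proof.
apply: leq_trans (card_ffun_fiber_le i v).
rewrite /vdeg; set A := nonedges_at G i v; set B := [set e in G | in_edge i v e].
have /eqP <- : #|A :|: B| == #|A| + #|B|.
  rewrite (leq_card_setU A B).2 -setI_eq0; apply/eqP/setP => e.
  by rewrite !inE; case: (e \in G); rewrite ?andbF.
apply: subset_leq_card; apply/subsetP => e.
by rewrite !inE /in_edge => /orP [/andP [-> _] | /andP [_ ->]].
Qed.

Lemma card_nonedges_at_le K n (G : kpgraph K.+1 n) i v (Q : nat) : 0 < Q ->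
  ((1 - Q%:R^-1) * n%:R ^+ K <= (vdeg G i v)%:R :> rat)%R ->
  #|nonedges_at G i v| * Q <= n ^ K.
Proof.
move=> Q_gt0 mindeg; have := card_nonedges_at_add_vdeg G i v.
rewrite -!(ler_nat rat) natrD natrM natrX.
have key (a b c q : rat) : (0 < q -> (1 - q^-1) * a <= c -> b + c <= a -> b * q <= a)%R.
  move=> q_gt0 le_a_c le_b_c; have le_b : (b <= a / q)%R by lra.
  by rewrite -[X in (_ <= X)%R](divfK (lt0r_neq0 q_gt0)) ler_pM2r.
by apply: key mindeg; rewrite ltr0n.
Qed.

Theorem lemma8p18 :
  forall k : nat, (0 < k)%N ->
  exists (d : rat) (n0 : nat), (0 < d)%R /\
    forall n : nat, (n0 <= n)%N ->
    forall G : kpgraph k n,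
      (forall (i : 'I_k) (v : 'I_n),
         ((1 - d) * (n%:R ^+ k.-1) <= (vdeg G i v)%:R)%R) ->
      exists M : kpgraph k n, perfect_matching G M.
Proof.
case=> [//|K] _.
exists ((2 * K.+2)%:R^-1)%R, (2 * K.+2 * K.+1).+1; split.
  by rewrite invr_gt0 ltr0n muln_gt0.
move=> n large_n G mindeg.
apply: improvable_perfect_matching => S s0 pmS s0S s0G.
apply: (exists_better_matching pmS s0S _ large_n s0G) => i v.
exact: card_nonedges_at_le (mindeg i v).
Qed.
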